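(* Let $\{(\iota_1,z_1^* ),\dots,(\iota_J,z_J^* )\}$ be minimally degenerate, let $\vec{\mathfrak c}\in(0,\infty)^J$ be the unique unit positive vector with $\ker A^*=\mathbb{R}\vec{\mathfrak c}$, and assume $$\sum_{i=1}^J|v_i^*|^2>0,\qquad v_i^*:=\sum_{j=1}^J\frac{A^*_{ij}\mathfrak c_i\mathfrak c_j}{|z_i^*-z_j^*|^2}(z_j^*-z_i^* )\in\mathbb{R}^N.$$ Then for any $K_0>0$ and $\delta_1>0$ there exists $\delta_2>0$ such that $$\sum_{i}\lambda_i^{2D-2}(A[\vec z]\vec\lambda^D)_i^2+\sum_i\lambda_i^{2D}\Big|\sum_j\frac{A[\vec z]_{ij}\lambda_j^D(z_i-z_j)}{|z_i-z_j|^2}\Big|^2\simeq_{K_0,\delta_1}\lambda_{\max}^{2D-2}|A[\vec z]\vec\lambda^D|^2+\lambda_{\max}^{4D}$$ for all $\vec\lambda\in(0,\infty)^J$ and $\vec z\in(\mathbb{R}^N)^J$ with $\lambda_{\max}\le K_0$, $\lambda_{\mathrm{max2}}\ge\delta_1\lambda_{\max}$ and $|\vec z-\vec z^*|<\delta_2$.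
   Context: $N\ge7$, $D=\frac{N-2}2$; $\iota_i\in\{\pm1\}$, distinct $z_i^*\in\mathbb{R}^N$. For $\vec z=(z_1,\dots,z_J)$, $A[\vec z]_{ij}=\mathbf 1_{i\ne j}\kappa_0\kappa_\infty\frac{\iota_i\iota_j}{|z_i-z_j|^{N-2}}$ (fixed positive constants $\kappa_0,\kappa_\infty$) and $A^*=A[\vec z^*]$. Minimally degenerate: $A^*$ has a nonzero kernel element in $[0,\infty)^J$ but for every proper subset $\mathcal I$ with $|\mathcal I|\ge2$ the submatrix $A^*_{\mathcal I}$ has none in $[0,\infty)^{\mathcal I}$. $\vec\lambda^D=(\lambda_i^D)_i$, $\lambda_{\max}$, $\lambda_{\mathrm{max2}}$ largest and second largest $\lambda_i$; terms with $i=j$ vanish since $A[\vec z]_{ii}=0$. *)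

From HB Require Import structures.
From mathcomp Require Import all_boot all_order all_algebra.
From mathcomp Require Import reals exp.
Set Implicit Arguments. Unset Strict Implicit. Unset Printing Implicit Defensive.
Import Order.TTheory GRing.Theory Num.Theory.
Local Open Scope ring_scope.

Section Defs.
Variables (R : realType) (N J : nat).

Definition pt := 'I_N -> R.

Definition vnorm2 (x : pt) : R := \sum_(k < N) x k ^+ 2.
Definition vnorm (x : pt) : R := Num.sqrt (vnorm2 x).
Definition vsub (x y : pt) : pt := fun k => x k - y k.

Definition Dexp : R := (N%:R - 2) / 2.

Definition Amat (k0 kinf : R) (iota : 'I_J -> R) (z : 'I_J -> pt)
  (i j : 'I_J) : R :=
  if i == j then 0
  else k0 * kinf * iota i * iota j / (vnorm (vsub (z i) (z j))) ^+ (N - 2).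

Definition mulAv (A : 'I_J -> 'I_J -> R) (x : 'I_J -> R) (i : 'I_J) : R :=
  \sum_(j < J) A i j * x j.

Definition jnorm2 (x : 'I_J -> R) : R := \sum_(i < J) x i ^+ 2.

Definition cfg_dist (z z' : 'I_J -> pt) : R :=
  Num.sqrt (\sum_(i < J) vnorm2 (vsub (z i) (z' i))).

(* Nonzero kernel element in [0,oo)^I of the principal submatrix A_I,
   vectors on I represented as functions on 'I_J vanishing off I. *)
Definition has_nonneg_kernel (A : 'I_J -> 'I_J -> R) (I : {set 'I_J}) : Prop :=
  exists x : 'I_J -> R,
    [/\ forall j, 0 <= x j,
        forall j, j \notin I -> x j = 0,
        exists2 j, j \in I & x j != 0 &
        forall i, i \in I -> \sum_(j in I) A i j * x j = 0].

Definition minimally_degenerate (A : 'I_J -> 'I_J -> R) : Prop :=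
  has_nonneg_kernel A [set: 'I_J] /\
  forall I : {set 'I_J}, I \proper [set: 'I_J] -> (2 <= #|I|)%N ->
    ~ has_nonneg_kernel A I.

(* lambda_max and second largest lambda (order statistic, ties counted):
   lambda_max2 = max over pairs i <> j of min(lambda_i, lambda_j). *)
Definition lmax (l : 'I_J -> R) : R := \big[Num.max/0]_(i < J) l i.
Definition lmax2 (l : 'I_J -> R) : R :=
  \big[Num.max/0]_(i < J) \big[Num.max/0]_(j < J | j != i) Num.min (l i) (l j).

Definition lpow (l : 'I_J -> R) (a : R) : 'I_J -> R := fun i => powR (l i) a.

End Defs.

From mathcomp Require Import all_boot all_order all_algebra.
From mathcomp Require Import ring lra.
From mathcomp Require Import boolp classical_sets reals topology normedtype realfun exp derive.
Set Implicit Arguments. Unset Strict Implicit. Unset Printing Implicit Defensive.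
Import Order.TTheory GRing.Theory Num.Theory.
Import numFieldNormedType.Exports.
Local Open Scope classical_set_scope.
Local Open Scope ring_scope.

(* Write lambda = lambda_max * r with r in (0,1]^J, max r = 1, and x = r^D.  Both
   sides of the estimate are lambda_max^(4D-2) times expressions in x, s = r^(2D-2),
   A[z], B[z] and lambda_max <= K0, and the upper bound is a direct estimate.  For the
   lower bound, x ranges over the compact set {x in [0,1]^J | sum x >= 1}, where two
   functionals are positive at z = z*: |A* x|^2 + K0^2 |B* x|^2, since ker A* = R c
   and B* c <> 0 (this is v* <> 0), and, for every proper T with |T| >= 2,
   sum_(i in T) ((A*_T x)_i)^2 + sum_(j notin T) x_j^2, by minimal degeneracy.
   Compactness bounds both from below, uniformly for z near z*.  Given a threshold
   eta, either all r_i >= eta and the first bound controls everything, or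
   T = {i | r_i >= eta} is proper, contains the two indices with r_i >= delta1 >= eta,
   the components off T are negligible, and the second bound controls the first
   term of the left-hand side. *)

Section SumBounds.
Context {R : realFieldType}.

Lemma ler_sum_term {I : finType} (P : pred I) (F : I -> R) i :
  P i -> (forall j, P j -> 0 <= F j) -> F i <= \sum_(j | P j) F j.
Proof. by move=> Pi F0; rewrite (bigD1 i) //= lerDl sumr_ge0 // => j /andP[/F0]. Qed.

Lemma ler_sum_ord (n : nat) (F : 'I_n -> R) (c : R) :
  (forall i, F i <= c) -> \sum_i F i <= n%:R * c.
Proof.
by move=> Fc; rewrite (le_trans (ler_sum _ (fun i _ => Fc i))) // sumr_const card_ord mulr_natl.
Qed.

Lemma ler_norm_sumB (n : nat) (F G : 'I_n -> R) (e : R) :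
  (forall j, `|F j - G j| <= e) -> `|\sum_j F j - \sum_j G j| <= n%:R * e.
Proof. by move=> FG; rewrite -sumrB (le_trans (ler_norm_sum _ _ _)) // ler_sum_ord. Qed.

Lemma sqr_le_norm (u b : R) : `|u| <= b -> u ^+ 2 <= b ^+ 2.
Proof.
rewrite ler_norml => /andP[lo hi].
have : 0 <= (b - u) * (b + u) by apply: mulr_ge0; lra.
nra.
Qed.

Lemma ler_norm_near (u v a e : R) : `|v| <= a -> `|u - v| <= e -> `|u| <= a + e.
Proof.
move=> va uv; rewrite -[u](subrK v) (le_trans (ler_normD _ _)) //.
by rewrite addrC lerD.
Qed.

Lemma sqr_le_perturb (u v e : R) : `|u - v| <= e -> v ^+ 2 <= 2 * u ^+ 2 + 2 * e ^+ 2.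
Proof. by move=> /sqr_le_norm uv_le; have := sqr_ge0 (u + (u - v)); nra. Qed.

Lemma sum_sqr_perturb (I : finType) (P : pred I) (u v : I -> R) (e : R) :
  (forall i, P i -> `|u i - v i| <= e) ->
  \sum_(i | P i) v i ^+ 2 <= 2 * \sum_(i | P i) u i ^+ 2 + 2 * (#|I|%:R * e ^+ 2).
Proof.
move=> uv; apply: le_trans (ler_sum _ (fun i Pi => sqr_le_perturb (uv i Pi))) _.
rewrite big_split /= -mulr_sumr lerD2l -mulr_sumr ler_wpM2l //.
rewrite mulr_natl -sumr_const [X in X <= _]big_mkcond ler_sum // => i _.
by case: (P i) => //; exact: sqr_ge0.
Qed.

Lemma sum_sqr_eq0 {I : finType} (P : pred I) (F : I -> R) :
  \sum_(i | P i) F i ^+ 2 = 0 -> forall i, P i -> F i = 0.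
Proof.
move=> F0 i Pi; have := ler_sum_term (F := fun j => F j ^+ 2) Pi (fun j _ => sqr_ge0 (F j)).
by rewrite F0 => Fi_le0; apply/eqP; rewrite -sqrf_eq0 eq_le Fi_le0 sqr_ge0.
Qed.

Lemma fin_norm_bound {I : finType} (f : I -> R) : exists2 b, 0 <= b & forall i, `|f i| <= b.
Proof.
exists (\sum_i `|f i|) => [|i]; first by apply: sumr_ge0 => i _.
by apply: (ler_sum_term (P := xpredT) (F := fun i => `|f i|)) => // j _.
Qed.

Lemma exists_small_sqr (K c : R) : 0 <= K -> 0 < c ->
  exists2 e, 0 < e & K * e ^+ 2 <= c.
Proof.
move=> K0 c0; have K1 : 0 < K + 1 by rewrite ltr_wpDl.
exists (Num.min 1 (c / (K + 1))); first by rewrite lt_min ltr01 divr_gt0.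
set e := Num.min _ _; have e1 : e <= 1 by rewrite ge_min lexx.
have e0 : 0 <= e by rewrite le_min ler01 divr_ge0 ?ltW.
have ec : (K + 1) * e <= c by rewrite mulrC -ler_pdivlMr // ge_min lexx orbT.
have : K * e ^+ 2 <= K * e by rewrite ler_wpM2l // expr2 ler_piMl.
nra.
Qed.

End SumBounds.

Section Norms.
Context {R : realType}.

Lemma vnorm2_ge0 N (y : pt R N) : 0 <= vnorm2 y.
Proof. by apply: sumr_ge0 => k _; exact: sqr_ge0. Qed.

Lemma jnorm2_ge0 J (y : 'I_J -> R) : 0 <= jnorm2 y.
Proof. by apply: sumr_ge0 => i _; exact: sqr_ge0. Qed.

Lemma vnorm2_scale N (a : R) (y : pt R N) : vnorm2 (fun k => a * y k) = a ^+ 2 * vnorm2 y.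
Proof. by rewrite /vnorm2 mulr_sumr; apply: eq_bigr => k _; rewrite exprMn. Qed.

Lemma jnorm2_scale J (a : R) (y : 'I_J -> R) : jnorm2 (fun i => a * y i) = a ^+ 2 * jnorm2 y.
Proof. by rewrite /jnorm2 mulr_sumr; apply: eq_bigr => i _; rewrite exprMn. Qed.

End Norms.

Section Convergence.
Context {R : realType} {T : Type} (F : set_system T) {FF : Filter F}.

Lemma cvg_sumr (I : Type) (r : seq I) (P : pred I) (f : I -> T -> R) (a : I -> R) :
  (forall i, P i -> f i @ F --> a i) ->
  (fun t => \sum_(i <- r | P i) f i t) @ F --> \sum_(i <- r | P i) a i.
Proof. by apply: cvg_big; exact: add_continuous. Qed.

Lemma cvg_exprn (f : T -> R) (a : R) n :
  f @ F --> a -> (fun t => f t ^+ n) @ F --> a ^+ n.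
Proof. by move=> fa; exact: cvg_comp _ _ fa (@exprn_continuous R n a). Qed.

End Convergence.

Section NearConfiguration.
Variables (R : realType) (N J : nat) (zs : 'I_J -> pt R N).

Definition cfg_nbhs : set_system ('I_J -> pt R N) :=
  filter_from [set d : R | 0 < d] (fun d => [set z | cfg_dist z zs < d]).

Lemma cfg_dist_refl : cfg_dist zs zs = 0.
Proof.
rewrite /cfg_dist big1 ?sqrtr0 // => i _.
by rewrite /vnorm2 big1 // => k _; rewrite /vsub subrr expr0n.
Qed.

Global Instance cfg_nbhs_filter : ProperFilter cfg_nbhs.
Proof.
apply: filter_from_proper => [|d d0]; last by exists zs; rewrite /= cfg_dist_refl.
apply: filter_from_filter; first by exists 1; exact: ltr01.
move=> a b a0 b0; exists (Num.min a b); first by rewrite /= lt_min a0 b0.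
by move=> z /=; rewrite lt_min => /andP[].
Qed.

Lemma coord_le_cfg_dist z i k : `|z i k - zs i k| <= cfg_dist z zs.
Proof.
have sqr_le_vnorm2 (x : pt R N) : x k ^+ 2 <= vnorm2 x.
  by rewrite /vnorm2; apply: (ler_sum_term (P := xpredT)) => // k' _; exact: sqr_ge0.
have dist_ge0 : 0 <= \sum_i' vnorm2 (vsub (z i') (zs i')).
  by apply: sumr_ge0 => i' _; exact: vnorm2_ge0.
rewrite /cfg_dist -sqrtr_sqr ler_sqrt //.
apply: le_trans (sqr_le_vnorm2 (vsub (z i) (zs i))) _.
apply: (ler_sum_term (P := xpredT) (F := fun i' => vnorm2 (vsub (z i') (zs i')))) => // i' _.
exact: vnorm2_ge0.
Qed.

Lemma cvg_cfg_coord i k : (fun z : 'I_J -> pt R N => z i k) @ cfg_nbhs --> zs i k.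
Proof.
apply/cvgrPdist_lt => e e0; exists e => // z /= zd.
by rewrite distrC; exact: le_lt_trans (coord_le_cfg_dist z i k) zd.
Qed.

Lemma cvg_cfg_vnorm2 i j :
  (fun z : 'I_J -> pt R N => vnorm2 (vsub (z i) (z j))) @ cfg_nbhs -->
  vnorm2 (vsub (zs i) (zs j)).
Proof.
apply: cvg_sumr => k _; apply: cvg_exprn.
by apply: cvgB; exact: cvg_cfg_coord.
Qed.

Hypothesis zs_inj : forall i j, i != j -> zs i <> zs j.

Lemma vnorm2_vsub_gt0 i j : i != j -> 0 < vnorm2 (vsub (zs i) (zs j)).
Proof.
move=> ij; rewrite lt_def vnorm2_ge0 andbT; apply/eqP => /sum_sqr_eq0 zero.
by apply: (zs_inj ij); apply/funext => k; apply/subr0_eq; exact: zero.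
Qed.

Variables (k0 kinf : R) (iota : 'I_J -> R).

Definition Bmat (z : 'I_J -> pt R N) (i j : 'I_J) (k : 'I_N) : R :=
  Amat k0 kinf iota z i j * (z i k - z j k) / vnorm2 (vsub (z i) (z j)).

Lemma cvg_cfg_Amat i j :
  (fun z => Amat k0 kinf iota z i j) @ cfg_nbhs --> Amat k0 kinf iota zs i j.
Proof.
rewrite /Amat; case: eqP => [_|/eqP ij]; first exact: cvg_cst.
apply: cvgMl_tmp; apply: cvgV.
  by rewrite expf_eq0 negb_and sqrtr_eq0 -ltNge vnorm2_vsub_gt0 ?orbT.
apply: cvg_exprn; apply: (continuous_cvg _ (@sqrt_continuous R _)).
exact: cvg_cfg_vnorm2.
Qed.

Lemma cvg_cfg_Bmat i j k : (fun z => Bmat z i j k) @ cfg_nbhs --> Bmat zs i j k.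
Proof.
have [<-|ij] := eqVneq i j.
  by rewrite /Bmat /Amat eqxx !mul0r; under eq_fun do rewrite !mul0r; exact: cvg_cst.
apply: cvgM; last by apply: cvgV; [rewrite gt_eqF ?vnorm2_vsub_gt0 | exact: cvg_cfg_vnorm2].
by apply: cvgM; [exact: cvg_cfg_Amat | apply: cvgB; exact: cvg_cfg_coord].
Qed.

Lemma near_cfg_coefs (eps : R) : 0 < eps ->
  exists2 d, 0 < d & forall z, cfg_dist z zs < d ->
    (forall i j, `|Amat k0 kinf iota z i j - Amat k0 kinf iota zs i j| < eps) /\
    (forall i j k, `|Bmat z i j k - Bmat zs i j k| < eps).
Proof.
move=> eps0.
have nearA : \forall z \near cfg_nbhs, forall p : 'I_J * 'I_J,
    `|Amat k0 kinf iota z p.1 p.2 - Amat k0 kinf iota zs p.1 p.2| < eps.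
  by apply: filter_forall => p; move/cvgrPdistC_lt: (@cvg_cfg_Amat p.1 p.2); apply.
have nearB : \forall z \near cfg_nbhs, forall p : 'I_J * 'I_J * 'I_N,
    `|Bmat z p.1.1 p.1.2 p.2 - Bmat zs p.1.1 p.1.2 p.2| < eps.
  by apply: filter_forall => p; move/cvgrPdistC_lt: (@cvg_cfg_Bmat p.1.1 p.1.2 p.2); apply.
have [d /= d0 near_d] := filterI nearA nearB.
exists d => // z /near_d [zA zB]; split=> [i j|i j k]; [exact: zA (i, j) | exact: zB (i, j, k)].
Qed.

End NearConfiguration.

Section CubeCap.
Context {R : realType}.

Lemma compact_lbound_gt0 (T : topologicalType) (f : T -> R) (A : set T) :
  compact A -> {within A, continuous f} -> (forall t, A t -> 0 < f t) ->
  exists2 e, 0 < e & forall t, A t -> e <= f t.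
Proof.
move=> cA cf f_gt0; have [->|/set0P A0] := eqVneq A set0; first by exists 1.
have [c /set_mem Ac c_min] := compact_EVT_min A0 cA cf.
by exists (f c) => [|t At]; [exact: f_gt0 | apply: c_min; exact: mem_set].
Qed.

Definition in_cube_cap (n : nat) (x : 'I_n -> R) : Prop :=
  (forall j, 0 <= x j <= 1) /\ 1 <= \sum_j x j.

Lemma compact_cube_cap n :
  compact [set v : 'rV[R]_n | in_cube_cap (fun j => v ord0 j)].
Proof.
have -> : [set v : 'rV[R]_n | in_cube_cap (fun j => v ord0 j)] =
    [set v | forall j, `[0, 1]%classic (v ord0 j)] `&` [set v | 1 <= \sum_j v ord0 j].
  by apply/seteqP; split=> v [v01 v1]; split=> // j; have := v01 j; rewrite /= in_itv.
apply: compact_closedI.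
  by have := @rV_compact R n (fun=> `[0, 1]%classic); apply => _; exact: segment_compact.
apply: (@preimage_closed _ _ (fun v : 'rV[R]_n => \sum_j v ord0 j) [set x | 1 <= x]).
  by move=> v _; apply: (cvg_sumr (F := nbhs v)) => j _; exact: coord_continuous.
exact: closed_ge.
Qed.

Lemma cube_cap_lbound n (Phi : ('I_n -> R) -> R) :
  continuous (fun v : 'rV[R]_n => Phi (fun j => v ord0 j)) ->
  (forall x, in_cube_cap x -> 0 < Phi x) ->
  exists2 e, 0 < e & forall x, in_cube_cap x -> e <= Phi x.
Proof.
move=> Phi_cont Phi_gt0.
have [e e0 Phi_ge] := compact_lbound_gt0 (compact_cube_cap (n := n))
  (continuous_subspaceT Phi_cont) (fun v => Phi_gt0 _).
exists e => // x /= x_cap; have row_x : (fun j => (\row_j x j) ord0 j) = x.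
  by apply/funext => j; rewrite mxE.
by have := Phi_ge (\row_j x j); rewrite /= row_x; exact.
Qed.

End CubeCap.

Lemma fin_uniform_lbound (R : realDomainType) (I : finType) (X : Type)
    (Q : I -> X -> Prop) (f : I -> X -> R) :
  (forall i, exists2 e, 0 < e & forall x, Q i x -> e <= f i x) ->
  exists2 e, 0 < e & forall i x, Q i x -> e <= f i x.
Proof.
move=> lb; suff [e e0 e_le] : exists2 e, 0 < e & forall i, i \in enum I ->
    forall x, Q i x -> e <= f i x.
  by exists e => // i; apply: e_le; rewrite mem_enum.
elim: (enum I) => [|i s [e e0 e_le]]; first by exists 1.
have [ei ei0 ei_le] := lb i.
exists (Num.min e ei) => [|i']; first by rewrite lt_min e0 ei0.
rewrite inE => /predU1P[-> x /ei_le|/e_le i'_le x /i'_le]; apply: le_trans.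
  by rewrite ge_min lexx orbT.
by rewrite ge_min lexx.
Qed.

Section LimitForms.
Variables (R : realType) (N J : nat).
Implicit Types (A : 'I_J -> 'I_J -> R) (B : 'I_J -> 'I_J -> 'I_N -> R) (x : 'I_J -> R)
  (T : {set 'I_J}).

Definition mulBv B x (i : 'I_J) : pt R N := fun k => \sum_j B i j k * x j.

Definition trivial_joint_kernel A B : Prop :=
  forall x, (forall i, mulAv A x i = 0) -> (forall i k, mulBv B x i k = 0) -> forall j, x j = 0.

Definition full_form (K0 : R) A B x :=
  jnorm2 (mulAv A x) + K0 ^+ 2 * \sum_i vnorm2 (mulBv B x i).

(* vanishes exactly when x is supported in T and x restricted to T lies in
   the kernel of the principal submatrix A_T *)
Definition restricted_form A (T : {set 'I_J}) x :=
  \sum_(i in T) (\sum_(j in T) A i j * x j) ^+ 2 + \sum_(j | j \notin T) x j ^+ 2.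

Lemma continuous_full_form K0 A B :
  continuous (fun v : 'rV[R]_J => full_form K0 A B (fun j => v ord0 j)).
Proof.
have cvg_entry (C : 'I_J -> R) (v : 'rV[R]_J) :
    (fun w : 'rV[R]_J => (\sum_j C j * w ord0 j) ^+ 2) @ nbhs v -->
    (\sum_j C j * v ord0 j) ^+ 2.
  by apply: cvg_exprn; apply: cvg_sumr => j _; apply: cvgMl_tmp; exact: coord_continuous.
move=> v; apply: (@cvgD _ _ _ (nbhs v)); last apply: cvgMl_tmp.
  by apply: cvg_sumr => i _; exact: cvg_entry.
by apply: cvg_sumr => i _; apply: cvg_sumr => k _; exact: cvg_entry.
Qed.

Lemma continuous_restricted_form A T :
  continuous (fun v : 'rV[R]_J => restricted_form A T (fun j => v ord0 j)).
Proof.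
move=> v; apply: (@cvgD _ _ _ (nbhs v)); apply: cvg_sumr => i _; apply: cvg_exprn;
  last exact: coord_continuous.
by apply: cvg_sumr => j _; apply: cvgMl_tmp; exact: coord_continuous.
Qed.

Lemma sum_cube_cap_neq0 x : in_cube_cap x -> exists j, x j != 0.
Proof.
move=> [_ x_ge1]; apply/existsP; apply: contraTT x_ge1 => /existsPn x0.
by rewrite big1 ?ler10 // => j _; apply/eqP; move: (x0 j); rewrite negbK.
Qed.

Lemma full_form_gt0 K0 A B : 0 < K0 -> trivial_joint_kernel A B ->
  forall x, in_cube_cap x -> 0 < full_form K0 A B x.
Proof.
move=> K0_gt0 kerAB x x_cap; have [j xj] := sum_cube_cap_neq0 x_cap.
have KBx_ge0 : 0 <= K0 ^+ 2 * \sum_i vnorm2 (mulBv B x i).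
  by rewrite mulr_ge0 ?sqr_ge0 // sumr_ge0 // => i _; exact: vnorm2_ge0.
rewrite /full_form lt_def addr_ge0 ?jnorm2_ge0 // andbT paddr_eq0 ?jnorm2_ge0 //.
rewrite mulf_eq0 sqrf_eq0 (gt_eqF K0_gt0) /=.
apply: contra xj => /andP[/eqP/sum_sqr_eq0 Ax0 /eqP/psumr_eq0P Bx0]; apply/eqP/kerAB.
  by move=> i; exact: Ax0.
by move=> i k; apply: (sum_sqr_eq0 (Bx0 (fun i _ => vnorm2_ge0 _) i isT)).
Qed.

Lemma restricted_form_gt0 A T : minimally_degenerate A ->
  T \proper [set: 'I_J]%SET -> (2 <= #|T|)%N ->
  forall x, in_cube_cap x -> 0 < restricted_form A T x.
Proof.
move=> [_ A_min] T_proper T_ge2 x [x01 x_ge1].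
have sumsqr_ge0 (P : pred 'I_J) (F : 'I_J -> R) : 0 <= \sum_(i | P i) F i ^+ 2.
  by apply: sumr_ge0 => i _; exact: sqr_ge0.
rewrite /restricted_form lt_def addr_ge0 // andbT paddr_eq0 //; apply/negP => /andP[].
move=> /eqP/sum_sqr_eq0 AT0 /eqP/sum_sqr_eq0 x_out.
apply: (A_min T T_proper T_ge2); exists x; split=> [j|//||i iT].
- by have /andP[] := x01 j.
- have [j xj] := sum_cube_cap_neq0 (conj x01 x_ge1).
  by exists j => //; apply: contraNT xj => /x_out ->.
- exact: AT0.
Qed.

Lemma full_form_lbound K0 A B : 0 < K0 -> trivial_joint_kernel A B ->
  exists2 e, 0 < e & forall x, in_cube_cap x -> e <= full_form K0 A B x.
Proof.
move=> K0_gt0 kerAB; apply: cube_cap_lbound; first exact: continuous_full_form.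
exact: full_form_gt0.
Qed.

Lemma restricted_form_lbound A : minimally_degenerate A ->
  exists2 e, 0 < e & forall T, T \proper [set: 'I_J]%SET -> (2 <= #|T|)%N ->
    forall x, in_cube_cap x -> e <= restricted_form A T x.
Proof.
move=> A_md.
pose Q T x := [/\ T \proper [set: 'I_J]%SET, (2 <= #|T|)%N & in_cube_cap x].
have lbT T : exists2 e, 0 < e & forall x, Q T x -> e <= restricted_form A T x.
  have [T_proper|T_full] := boolP (T \proper [set: 'I_J]%SET); last first.
    by exists 1 => // x; rewrite /Q (negbTE T_full); case.
  have [T_ge2|T_small] := boolP (2 <= #|T|)%N; last first.
    by exists 1 => // x; rewrite /Q (negbTE T_small); case.
  have [e e0 e_le] := cube_cap_lbound (@continuous_restricted_form A T)
    (restricted_form_gt0 A_md T_proper T_ge2).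
  by exists e => // x [_ _ /e_le].
have [e e0 e_le] := fin_uniform_lbound lbT.
by exists e => // T T_proper T_ge2 x x_cap; apply: e_le.
Qed.

End LimitForms.

Section ScaledForms.
Variables (R : realType) (N J : nat).
Implicit Types (A : 'I_J -> 'I_J -> R) (B : 'I_J -> 'I_J -> 'I_N -> R)
  (s x : 'I_J -> R) (m : R).

(* With lambda = m * r, x = r^D and s = r^(2D-2), the two sides of the theorem are
   m^(4D-2) times scaled_lhs and scaled_rhs (lemmas lhs_rescale and rhs_rescale). *)
Definition scaled_lhs A B s x m :=
  \sum_i s i * mulAv A x i ^+ 2 + m ^+ 2 * \sum_i x i ^+ 2 * vnorm2 (mulBv B x i).

Definition scaled_rhs A x m := jnorm2 (mulAv A x) + m ^+ 2.

Lemma scaled_lhs_ge0 A B s x m : (forall i, 0 <= s i) -> 0 <= scaled_lhs A B s x m.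
Proof.
rewrite /scaled_lhs mulr_sumr.
move=> s0; apply: addr_ge0; apply: sumr_ge0 => i _; first by rewrite mulr_ge0 ?sqr_ge0.
by rewrite mulr_ge0 ?sqr_ge0 // mulr_ge0 ?sqr_ge0 ?vnorm2_ge0.
Qed.

Lemma scaled_rhs_ge0 A x m : 0 <= scaled_rhs A x m.
Proof. by rewrite addr_ge0 ?sqr_ge0 ?jnorm2_ge0. Qed.

Lemma scaled_lhs_le_rhs A B s x m (b : R) :
  (forall i, 0 <= s i <= 1) -> (forall i, 0 <= x i <= 1) ->
  (forall i k, `|mulBv B x i k| <= b) ->
  scaled_lhs A B s x m <= (1 + J%:R * N%:R * b ^+ 2) * scaled_rhs A x m.
Proof.
move=> s01 x01 Bx_le.
have first_le : \sum_i s i * mulAv A x i ^+ 2 <= jnorm2 (mulAv A x).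
  by apply: ler_sum => i _; rewrite ler_piMl ?sqr_ge0 //; have /andP[] := s01 i.
have second_le : \sum_i x i ^+ 2 * vnorm2 (mulBv B x i) <= J%:R * N%:R * b ^+ 2.
  rewrite -mulrA; apply: ler_sum_ord => i.
  apply: (@le_trans _ _ (vnorm2 (mulBv B x i))).
    by have /andP[x0 x1] := x01 i; rewrite ler_piMl ?expr_le1 ?vnorm2_ge0.
  by apply: ler_sum_ord => k; exact: sqr_le_norm.
have c_ge0 : 0 <= J%:R * N%:R * b ^+ 2 by rewrite mulr_ge0 ?sqr_ge0 // mulr_ge0.
have := ler_wpM2l (sqr_ge0 m) second_le; have := jnorm2_ge0 (mulAv A x).
rewrite /scaled_lhs /scaled_rhs; move: first_le c_ge0 (sqr_ge0 m).
set a := jnorm2 _; set c := _ * b ^+ 2; set m2 := m ^+ 2; nra.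
Qed.

Lemma scaled_rhs_le_lhs_full (K0 : R) A B s x m (th th' e : R) :
  0 <= m <= K0 -> 0 < th -> 0 < th' -> 0 < e ->
  (forall i, th' <= s i) -> (forall i, th <= x i) -> e <= full_form K0 A B x ->
  scaled_rhs A x m <= (1 + K0 ^+ 2 / e) * (th'^-1 + (th ^+ 2)^-1) * scaled_lhs A B s x m.
Proof.
move=> /andP[m0 mK0] th0 th'0 e0 s_ge x_ge e_le.
set a := jnorm2 (mulAv A x); set b := \sum_i vnorm2 (mulBv B x i).
have a0 : 0 <= a by exact: jnorm2_ge0.
have b0 : 0 <= b by apply: sumr_ge0 => i _; exact: vnorm2_ge0.
have lhs_ge : th' * a + th ^+ 2 * (m ^+ 2 * b) <= scaled_lhs A B s x m.
  apply: lerD.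
    by rewrite mulr_sumr; apply: ler_sum => i _; apply: ler_wpM2r; [exact: sqr_ge0 | exact: s_ge].
  rewrite mulrCA; apply: ler_wpM2l; first exact: sqr_ge0.
  rewrite mulr_sumr; apply: ler_sum => i _; apply: ler_wpM2r; first exact: vnorm2_ge0.
  by rewrite !expr2; apply: ler_pM; rewrite ?(ltW th0).
set X := a + m ^+ 2 * b.
have mb0 : 0 <= m ^+ 2 * b by rewrite mulr_ge0 ?sqr_ge0.
have m2_le : m ^+ 2 <= K0 ^+ 2 / e * X.
  rewrite mulrAC ler_pdivlMr //.
  have m2K0 : m ^+ 2 <= K0 ^+ 2 by apply: sqr_le_norm; rewrite ger0_norm.
  have := ler_wpM2l (sqr_ge0 m) e_le; have := ler_wpM2r a0 m2K0.
  rewrite /full_form -/a -/b /X; lra.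
have X_le : X <= (th'^-1 + (th ^+ 2)^-1) * (th' * a + th ^+ 2 * (m ^+ 2 * b)).
  have th2 : 0 < th ^+ 2 by exact: exprn_gt0.
  have p1 : 0 <= th'^-1 * (th ^+ 2 * (m ^+ 2 * b)).
    by apply: mulr_ge0; [rewrite invr_ge0 ltW | rewrite mulr_ge0 ?sqr_ge0].
  have p2 : 0 <= (th ^+ 2)^-1 * (th' * a).
    by apply: mulr_ge0; [rewrite invr_ge0 ltW | rewrite mulr_ge0 // ltW].
  rewrite mulrDl !mulrDr mulKf ?gt_eqF // [X in _ + X]addrC mulKf ?gt_eqF // /X; lra.
have k0 : 0 <= K0 ^+ 2 / e by rewrite divr_ge0 ?sqr_ge0 ?ltW.
apply: (@le_trans _ _ ((1 + K0 ^+ 2 / e) * X)).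
  by rewrite /scaled_rhs -/a mulrDl mul1r; move: m2_le mb0; rewrite /X; lra.
rewrite -mulrA ler_wpM2l ?addr_ge0 //; apply: le_trans X_le _.
apply: ler_wpM2l lhs_ge; rewrite addr_ge0 // invr_ge0 ?exprn_ge0 ?ltW // ltW.
Qed.

Lemma scaled_rhs_le_lhs_proper (K0 : R) A B s x m (T : {set 'I_J}) (th' e al : R) :
  0 <= m <= K0 -> 0 < th' -> 0 < e ->
  (forall i, 0 <= s i) -> (forall i, i \in T -> th' <= s i) ->
  e <= \sum_(i in T) mulAv A x i ^+ 2 -> (forall i, `|mulAv A x i| <= al) ->
  scaled_rhs A x m <= (J%:R * al ^+ 2 + K0 ^+ 2) / (th' * e) * scaled_lhs A B s x m.
Proof.
move=> /andP[m0 mK0] th'0 e0 s0 s_ge e_le Ax_le.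
have sAx_ge0 i : 0 <= s i * mulAv A x i ^+ 2 by rewrite mulr_ge0 ?sqr_ge0.
have lhs_ge : th' * e <= scaled_lhs A B s x m.
  apply: (@le_trans _ _ (\sum_(i in T) s i * mulAv A x i ^+ 2)).
    rewrite (le_trans (ler_wpM2l (ltW th'0) e_le)) // mulr_sumr ler_sum // => i iT.
    by apply: ler_wpM2r; [exact: sqr_ge0 | exact: s_ge].
  rewrite /scaled_lhs [X in _ <= X + _](bigID (mem T)) /= -addrA lerDl.
  rewrite addr_ge0 ?sumr_ge0 // mulr_ge0 ?sqr_ge0 ?sumr_ge0 // => i _.
  by rewrite mulr_ge0 ?sqr_ge0 ?vnorm2_ge0.
have rhs_le : scaled_rhs A x m <= J%:R * al ^+ 2 + K0 ^+ 2.
  apply: lerD; first by apply: ler_sum_ord => i; exact: sqr_le_norm.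
  by apply: sqr_le_norm; rewrite ger0_norm.
apply: le_trans rhs_le _; set c := _ + K0 ^+ 2.
have c0 : 0 <= c by rewrite addr_ge0 ?sqr_ge0 // mulr_ge0 ?sqr_ge0.
have te_neq0 : th' * e != 0 by rewrite gt_eqF ?mulr_gt0.
rewrite -[X in X <= _](divfK te_neq0 c).
by apply: ler_wpM2l lhs_ge; rewrite divr_ge0 // mulr_ge0 ?ltW.
Qed.

End ScaledForms.

Section Perturbation.
Variables (R : realType) (N J : nat) (K0 eps : R).
Implicit Types (A : 'I_J -> 'I_J -> R) (B : 'I_J -> 'I_J -> 'I_N -> R) (x : 'I_J -> R).

Lemma mulAv_perturb A A' x i :
  (forall j, `|A i j - A' i j| <= eps) -> (forall j, `|x j| <= 1) ->
  `|mulAv A x i - mulAv A' x i| <= J%:R * eps.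
Proof.
move=> AA' x1; apply: ler_norm_sumB => j; rewrite -mulrBl normrM.
by rewrite -[eps]mulr1 ler_pM.
Qed.

Lemma norm_mulAv_le A x i b :
  (forall j, `|A i j| <= b) -> (forall j, `|x j| <= 1) -> `|mulAv A x i| <= J%:R * b.
Proof.
move=> Ab x1; rewrite (le_trans (ler_norm_sum _ _ _)) // ler_sum_ord // => j.
by rewrite normrM -[b]mulr1 ler_pM.
Qed.

Lemma full_form_perturb A A' B B' x :
  (forall i j, `|A i j - A' i j| <= eps) -> (forall i j k, `|B i j k - B' i j k| <= eps) ->
  (forall j, `|x j| <= 1) ->
  full_form K0 A' B' x <=
    2 * full_form K0 A B x + 2 * (J%:R ^+ 3 * (1 + K0 ^+ 2 * N%:R) * eps ^+ 2).
Proof.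
move=> AA' BB' x1.
have A'x_le := sum_sqr_perturb (P := xpredT) (fun i _ => mulAv_perturb (AA' i) x1).
have B'x_le i : vnorm2 (mulBv B' x i) <=
    2 * vnorm2 (mulBv B x i) + 2 * (#|'I_N|%:R * (J%:R * eps) ^+ 2).
  apply: (sum_sqr_perturb (P := xpredT)) => k _.
  exact: (mulAv_perturb (A := fun i j => B i j k) (A' := fun i j => B' i j k)).
have {}B'x_le : \sum_i vnorm2 (mulBv B' x i) <=
    2 * \sum_i vnorm2 (mulBv B x i) + 2 * (J%:R * (N%:R * (J%:R * eps) ^+ 2)).
  apply: le_trans (ler_sum _ (fun i _ => B'x_le i)) _.
  by rewrite big_split /= -mulr_sumr lerD2l -mulr_sumr ler_wpM2l // card_ord; apply: ler_sum_ord.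
have := ler_wpM2l (sqr_ge0 K0) B'x_le; rewrite card_ord in A'x_le.
have -> : J%:R ^+ 3 * (1 + K0 ^+ 2 * N%:R) * eps ^+ 2 =
  J%:R * (J%:R * eps) ^+ 2 + K0 ^+ 2 * (J%:R * (N%:R * (J%:R * eps) ^+ 2)) by ring.
move: A'x_le; rewrite /full_form /jnorm2; lra.
Qed.

Lemma restricted_sum_perturb A A' (T : {set 'I_J}) x :
  (forall i j, `|A i j * x j - (if j \in T then A' i j * x j else 0)| <= eps) ->
  \sum_(i in T) (\sum_(j in T) A' i j * x j) ^+ 2 <=
    2 * \sum_(i in T) mulAv A x i ^+ 2 + 2 * (J%:R ^+ 3 * eps ^+ 2).
Proof.
move=> AA'; rewrite [J%:R ^+ 3 * _](_ : _ = #|'I_J|%:R * (J%:R * eps) ^+ 2); last first.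
  by rewrite card_ord; ring.
apply: sum_sqr_perturb => i _; rewrite (big_mkcond (mem T)).
exact: ler_norm_sumB.
Qed.

End Perturbation.

Section NearLimit.
Variables (R : realType) (N J : nat) (K0 D eps : R).
Variables (As A : 'I_J -> 'I_J -> R) (Bs B : 'I_J -> 'I_J -> 'I_N -> R).
Variables (r : 'I_J -> R) (m : R) (im : 'I_J).
Hypothesis D_ge1 : 1 <= D.
Hypotheses (A_near : forall i j, `|A i j - As i j| <= eps)
  (B_near : forall i j k, `|B i j k - Bs i j k| <= eps).
Hypotheses (r_01 : forall i, 0 < r i <= 1) (r_im : r im = 1) (m_0K : 0 <= m <= K0).

Local Notation s := (fun i => powR (r i) (2 * D - 2)).
Local Notation x := (fun i => powR (r i) D).

Let D_ge0 : 0 <= D. Proof. by apply: le_trans D_ge1. Qed.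
Let D2_ge0 : 0 <= 2 * D - 2. Proof. by rewrite subr_ge0 -{1}[2]mulr1 ler_pM2l. Qed.

Let powR_r_01 a i : 0 <= a -> 0 <= powR (r i) a <= 1.
Proof.
move=> a0; rewrite powR_ge0 /=; have /andP[ri0 ri1] := r_01 i.
by have := @ge0_ler_powR R a a0 (r i) 1; rewrite powR1; apply=> //; rewrite nnegrE ?ler01 // ltW.
Qed.

Let powR_r_ge a eta i : 0 <= a -> 0 <= eta -> eta <= r i -> powR eta a <= powR (r i) a.
Proof. by move=> a0 eta0 eta_r; apply: ge0_ler_powR => //; rewrite nnegrE // (le_trans eta0). Qed.

Let x_norm_le1 j : `|x j| <= 1.
Proof. by have /andP[x0 x1] := powR_r_01 j D_ge0; rewrite ger0_norm. Qed.

Let x_cube_cap : in_cube_cap x.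
Proof.
split=> [j|]; first exact: powR_r_01.
rewrite (le_trans _ (ler_sum_term (P := xpredT) (F := x) (i := im) _ _)) //.
  by rewrite r_im powR1.
by move=> j _; exact: powR_ge0.
Qed.

Lemma scaled_lhs_le_rhs_near (be : R) : (forall i j k, `|Bs i j k| <= be) ->
  scaled_lhs A B s x m <= (1 + J%:R * N%:R * (J%:R * (be + eps)) ^+ 2) * scaled_rhs A x m.
Proof.
move=> Bs_le; apply: scaled_lhs_le_rhs => [i|i|i k]; first exact: powR_r_01 D2_ge0.
  exact: powR_r_01 D_ge0.
apply: (norm_mulAv_le (A := fun i j => B i j k)) => // j.
exact: ler_norm_near (Bs_le i j k) (B_near i j k).
Qed.

Lemma scaled_rhs_le_lhs_full_near (eta e0 : R) :
  0 < eta -> (forall i, eta <= r i) -> 0 < e0 ->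
  (forall y, in_cube_cap y -> e0 <= full_form K0 As Bs y) ->
  J%:R ^+ 3 * (1 + K0 ^+ 2 * N%:R) * eps ^+ 2 <= e0 / 4 ->
  scaled_rhs A x m <= (1 + K0 ^+ 2 / (e0 / 4)) *
    ((powR eta (2 * D - 2))^-1 + (powR eta D ^+ 2)^-1) * scaled_lhs A B s x m.
Proof.
move=> eta0 eta_r e0_gt0 e0_le eps_small.
apply: scaled_rhs_le_lhs_full; rewrite ?powR_gt0 ?divr_gt0 //.
- by move=> i; exact: powR_r_ge (ltW eta0) (eta_r i).
- by move=> i; exact: powR_r_ge (ltW eta0) (eta_r i).
have := e0_le _ x_cube_cap.
have := full_form_perturb K0 A_near B_near x_norm_le1.
lra.
Qed.

Lemma scaled_rhs_le_lhs_proper_near (eta e1 al : R) (i0 j0 : 'I_J) :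
  0 < eta -> i0 != j0 -> eta <= r i0 -> eta <= r j0 -> (exists j, r j < eta) -> 0 < e1 ->
  (forall T : {set 'I_J}, T \proper [set: 'I_J]%SET -> (2 <= #|T|)%N ->
     forall y, in_cube_cap y -> e1 <= restricted_form As T y) ->
  (forall i j, `|As i j| <= al) -> (al + eps) * eta <= eps ->
  J%:R ^+ 3 * eps ^+ 2 <= e1 / 4 ->
  scaled_rhs A x m <= (J%:R * (J%:R * (al + eps)) ^+ 2 + K0 ^+ 2) /
    (powR eta (2 * D - 2) * (e1 / 4)) * scaled_lhs A B s x m.
Proof.
move=> eta0 ij0 eta_i0 eta_j0 [j1 rj1] e1_gt0 e1_le As_le eta_small eps_small.
have A_le i j : `|A i j| <= al + eps by exact: ler_norm_near (As_le i j) (A_near i j).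
set T := [set i | eta <= r i]%SET.
have T_proper : T \proper [set: 'I_J]%SET.
  by rewrite properT; apply/eqP => /setP/(_ j1); rewrite !inE leNgt rj1.
have T_ge2 : (2 <= #|T|)%N by apply/card_gt1P; exists i0, j0; rewrite !inE.
pose y j := if j \in T then x j else 0.
have y_cap : in_cube_cap y.
  split=> [j|]; first by rewrite /y; case: ifP => _; rewrite ?powR_r_01 ?lexx ?ler01.
  rewrite (le_trans _ (ler_sum_term (P := xpredT) (F := y) (i := im) _ _)) //.
    have /andP[_ ri0_le1] := r_01 i0.
    by rewrite /y inE r_im (le_trans eta_i0 ri0_le1) powR1.
  by move=> j _; rewrite /y; case: ifP => _; rewrite ?powR_ge0.
have restr_y : restricted_form As T y = \sum_(i in T) (\sum_(j in T) As i j * x j) ^+ 2.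
  rewrite /restricted_form [X in _ + X]big1 ?addr0 => [|j /negbTE jT]; last by rewrite /y jT expr0n.
  by apply: eq_bigr => i _; congr (_ ^+ 2); apply: eq_bigr => j jT; rewrite /y jT.
have term_le i j : `|A i j * x j - (if j \in T then As i j * x j else 0)| <= eps.
  case: ifP => [_|]; first by rewrite -mulrBl normrM -[eps]mulr1 ler_pM ?x_norm_le1.
  rewrite inE => /negbT; rewrite -ltNge => rj_lt.
  have /andP[rj_gt0 rj_le1] := r_01 j.
  rewrite subr0 normrM (le_trans _ eta_small) // ler_pM // ger0_norm ?powR_ge0 //.
  by rewrite (le_trans (ge1r_powR _ _)) ?rj_gt0 ?rj_le1 // ltW.
have := restricted_sum_perturb term_le; rewrite -restr_y => perturb.
have e1_restr := e1_le T T_proper T_ge2 y y_cap.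
apply: (@scaled_rhs_le_lhs_proper _ _ _ K0 A B _ _ m T) => //; rewrite ?powR_gt0 ?divr_gt0 //.
- by move=> i; exact: powR_ge0.
- by move=> i; rewrite inE; exact: powR_r_ge (ltW eta0).
- lra.
- by move=> i; apply: norm_mulAv_le.
Qed.

End NearLimit.

Section ScaledEquivalence.
Variables (R : realType) (N J : nat) (K0 delta1 D : R).
Variables (As : 'I_J -> 'I_J -> R) (Bs : 'I_J -> 'I_J -> 'I_N -> R).
Hypotheses (K0_gt0 : 0 < K0) (delta1_gt0 : 0 < delta1) (D_ge1 : 1 <= D).
Hypothesis kerAB : trivial_joint_kernel As Bs.
Hypothesis As_md : minimally_degenerate As.

Theorem scaled_forms_equiv :
  exists2 eps, 0 < eps & exists2 C, 0 < C &
  forall A B (r : 'I_J -> R) m (im i0 j0 : 'I_J),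
    (forall i j, `|A i j - As i j| <= eps) ->
    (forall i j k, `|B i j k - Bs i j k| <= eps) ->
    (forall i, 0 < r i <= 1) -> r im = 1 ->
    i0 != j0 -> delta1 <= r i0 -> delta1 <= r j0 -> 0 <= m <= K0 ->
    let s i := powR (r i) (2 * D - 2) in
    let x i := powR (r i) D in
    scaled_lhs A B s x m <= C * scaled_rhs A x m /\
    scaled_rhs A x m <= C * scaled_lhs A B s x m.
Proof.
have [e0 e0_gt0 e0_le] := full_form_lbound K0_gt0 kerAB.
have [e1 e1_gt0 e1_le] := restricted_form_lbound As_md.
have [al al0 As_le] := fin_norm_bound (fun p : 'I_J * 'I_J => As p.1 p.2).
have [be be0 Bs_le] := fin_norm_bound (fun p : 'I_J * 'I_J * 'I_N => Bs p.1.1 p.1.2 p.2).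
have Kc0 : 0 <= J%:R ^+ 3 * (1 + K0 ^+ 2 * N%:R) :> R.
  by rewrite mulr_ge0 ?exprn_ge0 // addr_ge0 // mulr_ge0 ?sqr_ge0.
have min_gt0 : 0 < Num.min e0 e1 / 4 by rewrite divr_gt0 // lt_min e0_gt0 e1_gt0.
have [eps eps_gt0 eps_small] := exists_small_sqr Kc0 min_gt0.
have eps_e0 : J%:R ^+ 3 * (1 + K0 ^+ 2 * N%:R) * eps ^+ 2 <= e0 / 4.
  by rewrite (le_trans eps_small) // ler_wpM2r ?invr_ge0 ?ler0n // ge_min lexx.
have eps_e1 : J%:R ^+ 3 * eps ^+ 2 <= e1 / 4.
  apply: le_trans (le_trans eps_small _).
    by rewrite ler_wpM2r ?sqr_ge0 // ler_peMr ?exprn_ge0 // lerDl mulr_ge0 ?sqr_ge0.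
  by rewrite ler_wpM2r ?invr_ge0 ?ler0n // ge_min lexx orbT.
(* a term A i j * x j with r j < eta is at most eps, like the perturbation A - As *)
set eta := Num.min delta1 (eps / (al + eps)).
have eta_gt0 : 0 < eta by rewrite lt_min delta1_gt0 divr_gt0 // ltr_wpDl.
have eta_delta1 : eta <= delta1 by rewrite ge_min lexx.
have eta_small : (al + eps) * eta <= eps.
  by rewrite mulrC -ler_pdivlMr ?ltr_wpDl // ge_min lexx orbT.
set C1 := 1 + J%:R * N%:R * (J%:R * (be + eps)) ^+ 2.
set C2 := (1 + K0 ^+ 2 / (e0 / 4)) *
  ((powR eta (2 * D - 2))^-1 + (powR eta D ^+ 2)^-1).
set C3 := (J%:R * (J%:R * (al + eps)) ^+ 2 + K0 ^+ 2) / (powR eta (2 * D - 2) * (e1 / 4)).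
have C1_ge1 : 1 <= C1 by rewrite lerDl mulr_ge0 ?sqr_ge0 // mulr_ge0.
have C2_ge0 : 0 <= C2.
  apply: mulr_ge0; first by rewrite addr_ge0 // divr_ge0 ?sqr_ge0 // ltW // divr_gt0.
  by rewrite addr_ge0 // invr_ge0 ?powR_ge0 ?exprn_ge0 ?powR_ge0.
have C3_ge0 : 0 <= C3.
  apply: divr_ge0; first by rewrite addr_ge0 ?sqr_ge0 // mulr_ge0 ?sqr_ge0.
  by rewrite mulr_ge0 ?powR_ge0 // divr_ge0 // ltW.
exists eps => //; exists (C1 + C2 + C3); first by lra.
move=> A B r m im i0 j0 A_near B_near r_01 r_im ij0 r_i0 r_j0 m_0K s x.
have lhs_ge0 : 0 <= scaled_lhs A B s x m by apply: scaled_lhs_ge0 => i; exact: powR_ge0.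
have rhs_ge0 := scaled_rhs_ge0 A x m.
split.
  apply: le_trans (scaled_lhs_le_rhs_near A m D_ge1 B_near r_01 (fun i j k => Bs_le (i, j, k))) _.
  by rewrite ler_wpM2r // -/C1; lra.
have [eta_r|/forallPn[j /negP/negP]] := boolP [forall i, eta <= r i].
  apply: le_trans (scaled_rhs_le_lhs_full_near D_ge1 A_near B_near r_01 r_im m_0K
    eta_gt0 (fun i => forallP eta_r i) e0_gt0 e0_le eps_e0) _.
  by rewrite ler_wpM2r // -/C2; lra.
rewrite -ltNge => r_j.
apply: le_trans (scaled_rhs_le_lhs_proper_near B D_ge1 A_near r_01 r_im m_0K eta_gt0 ij0
  (le_trans eta_delta1 r_i0) (le_trans eta_delta1 r_j0) (ex_intro _ j r_j) e1_gt0 e1_le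
  (fun i j => As_le (i, j)) eta_small eps_e1) _.
by rewrite ler_wpM2r // -/C3; lra.
Qed.

End ScaledEquivalence.

Section Maxima.
Variables (R : realType) (J : nat) (l : 'I_J -> R).
Hypothesis l_gt0 : forall i, 0 < l i.

Let l_ge0 i : 0 <= l i. Proof. exact: ltW. Qed.

Lemma le_lmax i : l i <= lmax l.
Proof. exact: le_bigmax. Qed.

Lemma lmax_attained : (0 < J)%N -> exists im, lmax l = l im.
Proof.
move=> J_gt0; have [im _ l_im] := @eq_bigmax _ _ _ 0 (Ordinal J_gt0) xpredT l isT
  (fun i _ => l_ge0 i).
by exists im.
Qed.

Lemma lmax_gt0 : (0 < J)%N -> 0 < lmax l.
Proof. by move=> J_gt0; have [im ->] := lmax_attained J_gt0. Qed.

Lemma lmax2_witness c : (1 < J)%N -> c <= lmax2 l ->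
  exists i0 j0, [/\ i0 != j0, c <= l i0 & c <= l j0].
Proof.
move=> J_gt1; have J_gt0 := ltnW J_gt1; rewrite /lmax2.
have [i1 _ ->] := @eq_bigmax _ _ _ 0 (Ordinal J_gt0) xpredT
  (fun i => \big[Num.max/0]_(j < J | j != i) Num.min (l i) (l j)) isT
  (fun i _ => bigmax_ge_id _ _ _ _).
have [j1 j1_i1] : exists j1 : 'I_J, j1 != i1.
  have [->|] := eqVneq i1 (Ordinal J_gt0); first by exists (Ordinal J_gt1).
  by exists (Ordinal J_gt0); rewrite eq_sym.
have min_ge0 j : j != i1 -> 0 <= Num.min (l i1) (l j) by rewrite le_min !l_ge0.
have [j2 j2_i1 ->] := @eq_bigmax _ _ _ 0 j1 _ (fun j => Num.min (l i1) (l j)) j1_i1 min_ge0.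
by rewrite le_min => /andP[c_i1 c_j2]; exists i1, j2; rewrite eq_sym.
Qed.

Lemma lmax_normalized c : (1 < J)%N -> c * lmax l <= lmax2 l ->
  [/\ forall i, 0 < l i / lmax l <= 1, exists im, l im / lmax l = 1
    & exists i0 j0, [/\ i0 != j0, c <= l i0 / lmax l & c <= l j0 / lmax l]].
Proof.
move=> J_gt1 l2; have M_gt0 := lmax_gt0 (ltnW J_gt1); split=> [i||].
- by rewrite divr_gt0 // ler_pdivrMr // mul1r le_lmax.
- by have [im l_im] := lmax_attained (ltnW J_gt1); exists im; rewrite -l_im divff ?gt_eqF.
- have [i0 [j0 [ij0 l_i0 l_j0]]] := lmax2_witness J_gt1 l2.
  by exists i0, j0; rewrite !ler_pdivlMr.
Qed.

End Maxima.

Section Rescaling.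
Variables (R : realType) (N J : nat) (D M : R).
Hypothesis M_gt0 : 0 < M.

Lemma powR_rescale a t : 0 <= t -> powR t a = powR M a * powR (t / M) a.
Proof. by move=> t0; rewrite -powRM ?divr_ge0 ?(ltW M_gt0) // mulrCA divff ?gt_eqF ?mulr1. Qed.

Lemma powR_double (t a : R) : 0 <= t -> powR t (2 * a) = powR t a ^+ 2.
Proof. by move=> t0; rewrite mulrC powRrM powR_mulrn ?powR_ge0. Qed.

Lemma powR_sqr_split : powR M D ^+ 2 = powR M (2 * D - 2) * M ^+ 2.
Proof.
rewrite -powR_double ?ltW // -[in RHS](powR_mulrn 2 (ltW M_gt0)) -powRD ?subrK //.
by rewrite (gt_eqF M_gt0) implybT.
Qed.

Variables (A : 'I_J -> 'I_J -> R) (B : 'I_J -> 'I_J -> 'I_N -> R) (l : 'I_J -> R).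
Hypothesis l_ge0 : forall i, 0 <= l i.

Local Notation P := (powR M D).
Local Notation q := (powR M (2 * D - 2)).
Local Notation s := (fun i => powR (l i / M) (2 * D - 2)).
Local Notation x := (fun i => powR (l i / M) D).

Let mulAv_lpow i : mulAv A (lpow l D) i = P * mulAv A x i.
Proof.
by rewrite /mulAv mulr_sumr; apply: eq_bigr => j _; rewrite /lpow powR_rescale // mulrCA.
Qed.

Let mulBv_lpow i : mulBv B (lpow l D) i = (fun k => P * mulBv B x i k).
Proof.
apply/funext => k; rewrite /mulBv mulr_sumr; apply: eq_bigr => j _.
by rewrite /lpow powR_rescale // mulrCA.
Qed.

Lemma lhs_rescale :
  \sum_i powR (l i) (2 * D - 2) * mulAv A (lpow l D) i ^+ 2 +
  \sum_i powR (l i) (2 * D) * vnorm2 (mulBv B (lpow l D) i) =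
  q * P ^+ 2 * scaled_lhs A B s x M.
Proof.
rewrite /scaled_lhs mulrDr !mulr_sumr; congr (_ + _); apply: eq_bigr => i _.
  by rewrite mulAv_lpow powR_rescale //; ring.
by rewrite mulBv_lpow vnorm2_scale powR_double // powR_rescale // exprMn powR_sqr_split; ring.
Qed.

Lemma rhs_rescale :
  q * jnorm2 (mulAv A (lpow l D)) + powR M (4 * D) = q * P ^+ 2 * scaled_rhs A x M.
Proof.
have -> : 4 * D = 2 * (2 * D) by rewrite mulrA -natrM.
rewrite powR_double ?ltW // powR_double ?ltW // -/P.
rewrite (_ : mulAv A (lpow l D) = fun i => P * mulAv A x i); last exact/funext/mulAv_lpow.
rewrite jnorm2_scale /scaled_rhs [P ^+ 2 ^+ 2]expr2 {2}powR_sqr_split; ring.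
Qed.

End Rescaling.

Lemma Dexp_ge1 (R : realType) (N : nat) : (4 <= N)%N -> 1 <= Dexp R N.
Proof.
move=> N_ge4; have : 4%:R <= N%:R :> R by rewrite ler_nat.
by rewrite /Dexp; lra.
Qed.

Lemma mulBv_Bmat (R : realType) (N J : nat) (k0 kinf : R) (iota : 'I_J -> R)
    (z : 'I_J -> pt R N) (y : 'I_J -> R) i :
  mulBv (Bmat k0 kinf iota z) y i = fun k =>
    \sum_j Amat k0 kinf iota z i j * y j * (z i k - z j k) / vnorm2 (vsub (z i) (z j)).
Proof. by apply/funext => k; apply: eq_bigr => j _; rewrite /Bmat; ring. Qed.

Lemma ker_meet_trivial (R : realType) (N J : nat) (A : 'I_J -> 'I_J -> R)
    (B : 'I_J -> 'I_J -> 'I_N -> R) (c : 'I_J -> R) :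
  (forall x, (forall i, mulAv A x i = 0) <-> exists t, forall i, x i = t * c i) ->
  (exists i k, mulBv B c i k != 0) -> trivial_joint_kernel A B.
Proof.
move=> kerA [i [k Bc_neq0]] x /kerA[t x_tc] Bx0 j.
have : mulBv B x i k = t * mulBv B c i k.
  by rewrite /mulBv mulr_sumr; apply: eq_bigr => j' _; rewrite x_tc mulrCA.
rewrite Bx0 => /esym/eqP; rewrite mulf_eq0 (negbTE Bc_neq0) orbF => /eqP t0.
by rewrite x_tc t0 mul0r.
Qed.

Lemma Bmat_mulBv_neq0 (R : realType) (N J : nat) (k0 kinf : R) (iota : 'I_J -> R)
    (zs : 'I_J -> pt R N) (c : 'I_J -> R) :
  0 < \sum_(i < J) vnorm2 (fun k : 'I_N =>
        \sum_(j < J) Amat k0 kinf iota zs i j * c i * c j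
                     / vnorm2 (vsub (zs i) (zs j)) * (zs j k - zs i k)) ->
  exists i k, mulBv (Bmat k0 kinf iota zs) c i k != 0.
Proof.
move=> v_gt0; set Bs := Bmat k0 kinf iota zs.
have [/existsP[i /existsP[k Bc]]|/existsPn Bc0] := boolP [exists i, exists k, mulBv Bs c i k != 0].
  by exists i, k.
move: v_gt0; rewrite big1 ?ltxx // => i _; rewrite /vnorm2 big1 // => k _.
have /existsPn/(_ k) := Bc0 i; rewrite negbK => /eqP Bcik.
suff -> : \sum_j Amat k0 kinf iota zs i j * c i * c j / vnorm2 (vsub (zs i) (zs j)) *
    (zs j k - zs i k) = - c i * mulBv Bs c i k by rewrite Bcik mulr0 expr0n.
by rewrite /mulBv mulr_sumr; apply: eq_bigr => j _; rewrite /Bs /Bmat; ring.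
Qed.
Theorem lemma4p6 (R : realType) (N J : nat)
  (k0 kinf : R) (iota : 'I_J -> R) (zs : 'I_J -> 'I_N -> R) (c : 'I_J -> R) :
  (7 <= N)%N -> (2 <= J)%N ->
  0 < k0 -> 0 < kinf ->
  (forall i, iota i = 1 \/ iota i = -1) ->
  (forall i j, i != j -> zs i <> zs j) ->
  minimally_degenerate (Amat k0 kinf iota zs) ->
  (forall i, 0 < c i) -> jnorm2 c = 1 ->
  (forall x : 'I_J -> R,
     (forall i, mulAv (Amat k0 kinf iota zs) x i = 0) <->
     exists t : R, forall i, x i = t * c i) ->
  0 < \sum_(i < J) vnorm2 (fun k : 'I_N =>
        \sum_(j < J) Amat k0 kinf iota zs i j * c i * c j
                     / vnorm2 (vsub (zs i) (zs j)) * (zs j k - zs i k)) ->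
  forall K0 delta1 : R, 0 < K0 -> 0 < delta1 ->
  exists delta2 : R, 0 < delta2 /\
  exists C : R, 0 < C /\
  forall (l : 'I_J -> R) (z : 'I_J -> 'I_N -> R),
    (forall i, 0 < l i) ->
    lmax l <= K0 -> delta1 * lmax l <= lmax2 l ->
    cfg_dist z zs < delta2 ->
    let D := Dexp R N in
    let A := Amat k0 kinf iota z in
    let AlD := mulAv A (lpow l D) in
    let LHS :=
      \sum_(i < J) powR (l i) (2 * D - 2) * AlD i ^+ 2
      + \sum_(i < J) powR (l i) (2 * D) *
          vnorm2 (fun k : 'I_N =>
            \sum_(j < J) A i j * powR (l j) D * (z i k - z j k)
                         / vnorm2 (vsub (z i) (z j))) in
    let RHS := powR (lmax l) (2 * D - 2) * jnorm2 AlD + powR (lmax l) (4 * D) in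
    LHS <= C * RHS /\ RHS <= C * LHS.
Proof.
move=> N_ge7 J_ge2 _ _ _ zs_inj zs_md _ _ kerA v_gt0 K0 delta1 K0_gt0 delta1_gt0.
have kerAB := ker_meet_trivial kerA (Bmat_mulBv_neq0 v_gt0).
have [eps eps_gt0 [C C_gt0 equiv]] := scaled_forms_equiv K0_gt0 delta1_gt0
  (Dexp_ge1 R (leq_trans (isT : 4 <= 7)%N N_ge7)) kerAB zs_md.
have [delta2 delta2_gt0 near_zs] := near_cfg_coefs zs_inj k0 kinf iota eps_gt0.
exists delta2; split=> //; exists C; split=> // l z l_gt0 lK0 l2 zd D A AlD LHS RHS.
have M_gt0 := lmax_gt0 l_gt0 (ltnW J_ge2).
have [r_01 [im r_im] [i0 [j0 [ij0 r_i0 r_j0]]]] := lmax_normalized l_gt0 J_ge2 l2.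
have M_0K : 0 <= lmax l <= K0 by rewrite ltW.
have [A_near B_near] := near_zs z zd.
have [lhs_le rhs_le] := equiv _ _ _ _ im i0 j0 (fun i j => ltW (A_near i j))
  (fun i j k => ltW (B_near i j k)) r_01 r_im ij0 r_i0 r_j0 M_0K.
have l_ge0 i : 0 <= l i by exact: ltW.
rewrite {}/LHS {}/RHS {}/AlD {}/A; under [X in _ + X]eq_bigr do rewrite -mulBv_Bmat.
rewrite (lhs_rescale D M_gt0 _ _ l_ge0) (rhs_rescale D M_gt0 _ l_ge0).
have scale_ge0 : 0 <= powR (lmax l) (2 * D - 2) * powR (lmax l) D ^+ 2.
  by rewrite mulr_ge0 ?powR_ge0 ?sqr_ge0.
by rewrite !(mulrCA C) !ler_wpM2l.
Qed.
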